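(* Let $R\subseteq\mathbb{C}$ be a discrete subset (i.e. without accumulation points in $\mathbb{C}$). Then for each $n\in\mathbb{N}$ there are only finitely many frieze patterns over $R\setminus\{0\}$ of height $n$.
   Context: A frieze pattern of height $n$ over $S\subseteq\mathbb{C}$ is a family $(c_{i,j})_{i\in\mathbb{Z},\ i\le j\le i+n+3}$ of complex numbers such that: - $c_{i,i}=c_{i,i+n+3}=0$ and $c_{i,i+1}=c_{i,i+n+2}=1$; - $c_{i,j}\in S$ for $i+2\le j\le i+n+1$; - every adjacent $2\times2$ determinant $c_{i,j}c_{i+1,j+1}-c_{i,j+1}c_{i+1,j}$ (all entries defined) equals $1$. *)

From Stdlib Require Import Reals ZArith List.
Open Scope R_scope.

Definition Cplx : Type := (R * R)%type.
Definition C0 : Cplx := (0, 0).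
Definition C1 : Cplx := (1, 0).
Definition Cmul (z w : Cplx) : Cplx :=
  (fst z * fst w - snd z * snd w, fst z * snd w + snd z * fst w).
Definition Csub (z w : Cplx) : Cplx := (fst z - fst w, snd z - snd w).
Definition Cnorm (z : Cplx) : R := sqrt (fst z ^ 2 + snd z ^ 2).

Definition discrete (S : Cplx -> Prop) : Prop :=
  forall z : Cplx, exists eps : R, 0 < eps /\
    forall w : Cplx, S w -> w <> z -> eps <= Cnorm (Csub w z).

Definition nonzero_part (S : Cplx -> Prop) : Cplx -> Prop :=
  fun z => S z /\ z <> C0.

Definition indom (n : nat) (i j : Z) : Prop :=
  (i <= j <= i + Z.of_nat n + 3)%Z.

(* A frieze pattern of height n over S, as a family c indexed by Z x Z
   (only values on the domain [indom n] are meaningful). *)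
Definition frieze (n : nat) (S : Cplx -> Prop) (c : Z -> Z -> Cplx) : Prop :=
  (forall i : Z,
      c i i = C0 /\ c i (i + Z.of_nat n + 3)%Z = C0 /\
      c i (i + 1)%Z = C1 /\ c i (i + Z.of_nat n + 2)%Z = C1) /\
  (forall i j : Z, (i + 2 <= j <= i + Z.of_nat n + 1)%Z -> S (c i j)) /\
  (forall i j : Z,
      indom n i j -> indom n (i + 1) (j + 1) ->
      indom n i (j + 1) -> indom n (i + 1) j ->
      Csub (Cmul (c i j) (c (i + 1) (j + 1))%Z)
           (Cmul (c i (j + 1)%Z) (c (i + 1)%Z j)) = C1).

(* The entries [m a b] of a frieze of height [n] satisfy the Ptolemy relations
   [m a c * m b d = m a b * m c d + m a d * m b c] for [a < b < c <= d <= a + n + 3], so the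
   entries of the first row behave like the diagonals of an [(n+3)]-gon all of whose sides
   are [1].  Over a discrete set the nonzero entries have modulus at least some [eps > 0], and
   then all diagonals are bounded: some ear diagonal [m s (s+2)] is at most [2] (otherwise the
   diagonals issuing from vertex [0] would keep growing, contradicting [m 0 (n+2) = 1]);
   cutting off that ear leaves a smaller polygon with sides at most [2], and Ptolemy's relation
   bounds the diagonals at the removed vertex by those of the smaller polygon.  So the first
   row ranges over the finitely many points of a bounded part of a discrete set, and the
   unimodular rule recovers the whole frieze from its first row. *)

From Stdlib Require Import Reals Lra Lia ZArith List ClassicalEpsilon.
From Coquelicot Require Import Coquelicot.

Lemma Cmod_ptolemy_le (x y u v w z : C) :
  (x * y = u * v + w * z)%C -> Cmod x * Cmod y <= Cmod u * Cmod v + Cmod w * Cmod z.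
Proof.
  intros E. rewrite <- !Cmod_mult, E. apply Cmod_triangle.
Qed.

(* [D a b] is read as the diagonal between the vertices [a < b] of a polygon with vertices
   [0, ..., k-1]. *)
Record ptolemy_polygon (k : nat) (D : nat -> nat -> C) (eps M : R) : Prop := {
  pp_ptolemy : forall a b c d, (a < b)%nat -> (b < c)%nat -> (c < d)%nat -> (d < k)%nat ->
    (D a c * D b d = D a b * D c d + D a d * D b c)%C;
  pp_lower : forall a b, (a < b)%nat -> (b < k)%nat -> eps <= Cmod (D a b);
  pp_side : forall a, (S a < k)%nat -> Cmod (D a (S a)) <= M;
  pp_closing : (1 < k)%nat -> Cmod (D 0%nat (k - 1)%nat) <= M }.

Section Polygon.
Variables (k : nat) (D : nat -> nat -> C) (eps M : R).
Hypothesis eps_gt0 : 0 < eps.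
Hypothesis HD : ptolemy_polygon k D eps M.

Lemma ptolemy_polygon_side_ge : (1 < k)%nat -> eps <= M.
Proof.
  intros Hk. apply Rle_trans with (Cmod (D 0%nat 1%nat)).
  - apply (pp_lower _ _ _ _ HD); lia.
  - apply (pp_side _ _ _ _ HD); lia.
Qed.

Lemma ptolemy_polygon_ear : (3 <= k)%nat ->
  exists s, (S (S s) < k)%nat /\ Cmod (D s (S (S s))) <= 2 * M.
Proof.
  intros Hk. apply NNPP; intros Hno.
  assert (Hlong : forall s, (S (S s) < k)%nat -> 2 * M < Cmod (D s (S (S s)))).
  { intros s Hs. apply Rnot_le_lt; intros Hle. apply Hno. now exists s. }
  assert (HM : 0 < M) by (apply Rlt_le_trans with eps; [|apply ptolemy_polygon_side_ge]; lia || lra).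
  assert (Hgrow : forall i, (S (S i) < k)%nat ->
    Cmod (D 0%nat (S i)) <= Cmod (D 0%nat (S (S i))) /\ 2 * M < Cmod (D 0%nat (S (S i)))).
  { induction i as [|i IH]; intros Hi.
    - split; [|now apply Hlong].
      assert (H1 := Hlong 0%nat Hi). assert (H2 := pp_side _ _ _ _ HD 0 ltac:(lia)). lra.
    - destruct (IH ltac:(lia)) as [Hinc Hbig].
      assert (P := Cmod_ptolemy_le _ _ _ _ _ _
        (pp_ptolemy _ _ _ _ HD 0 (S i) (S (S i)) (S (S (S i))) ltac:(lia) ltac:(lia) ltac:(lia) Hi)).
      assert (Ha := pp_side _ _ _ _ HD (S i) ltac:(lia)).
      assert (Hb := pp_side _ _ _ _ HD (S (S i)) Hi).
      assert (He := Hlong (S i) Hi).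
      assert (HX := Cmod_ge_0 (D 0%nat (S (S (S i))))).
      assert (HZ := Cmod_ge_0 (D 0%nat (S i))).
      set (X := Cmod (D 0%nat (S (S (S i))))) in *.
      set (Y := Cmod (D 0%nat (S (S i)))) in *.
      set (Z := Cmod (D 0%nat (S i))) in *.
      assert (Z * Cmod (D (S (S i)) (S (S (S i)))) <= Y * M)
        by (apply Rmult_le_compat; auto using Cmod_ge_0).
      assert (X * Cmod (D (S i) (S (S i))) <= X * M) by (apply Rmult_le_compat_l; auto).
      assert (Y * (2 * M) <= Y * Cmod (D (S i) (S (S (S i)))))
        by (apply Rmult_le_compat_l; lra).
      split; nra. }
  destruct (Hgrow (k - 3)%nat ltac:(lia)) as [_ Hbig].
  replace (S (S (k - 3))) with (k - 1)%nat in Hbig by lia.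
  assert (Hclose := pp_closing _ _ _ _ HD ltac:(lia)). lra.
Qed.
End Polygon.

Lemma Cmod_ptolemy_div (x y u v w z : C) (eps M B : R) : 0 < eps ->
  (x * y = u * v + w * z)%C -> eps <= Cmod x ->
  Cmod u <= M -> Cmod v <= B -> Cmod w <= B -> Cmod z <= M ->
  Cmod y <= 2 * M * B / eps.
Proof.
  intros He E Hx Hu Hv Hw Hz.
  assert (P := Cmod_ptolemy_le _ _ _ _ _ _ E).
  assert (Cmod u * Cmod v <= M * B) by (apply Rmult_le_compat; auto using Cmod_ge_0).
  assert (Cmod w * Cmod z <= B * M) by (apply Rmult_le_compat; auto using Cmod_ge_0).
  assert (eps * Cmod y <= Cmod x * Cmod y) by (apply Rmult_le_compat_r; auto using Cmod_ge_0).
  apply Rle_div_r; lra.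
Qed.

Definition skip (t u : nat) : nat := if Nat.ltb u t then u else S u.

Lemma skip_lt t u v : (u < v)%nat <-> (skip t u < skip t v)%nat.
Proof. unfold skip; destruct (Nat.ltb_spec u t), (Nat.ltb_spec v t); lia. Qed.

Lemma skip_le t u : (skip t u <= S u)%nat.
Proof. unfold skip; destruct (Nat.ltb_spec u t); lia. Qed.

Lemma skip_onto t v : v <> t -> exists u, (u <= v)%nat /\ skip t u = v.
Proof.
  intros Hv. destruct (Nat.ltb_spec v t).
  - exists v. unfold skip. destruct (Nat.ltb_spec v t); split; lia.
  - exists (pred v). unfold skip. destruct (Nat.ltb_spec (pred v) t); split; lia.
Qed.

Section Ear.
Variables (k s : nat) (D : nat -> nat -> C) (eps M : R).
Hypothesis eps_gt0 : 0 < eps.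
Hypothesis HD : ptolemy_polygon (S k) D eps M.
Hypothesis ear_lt : (S (S s) < S k)%nat.
Hypothesis ear_le : Cmod (D s (S (S s))) <= 2 * M.

Lemma ptolemy_polygon_cut_ear :
  ptolemy_polygon k (fun u v => D (skip (S s) u) (skip (S s) v)) eps (2 * M).
Proof.
  assert (HM : eps <= M) by (apply (ptolemy_polygon_side_ge (S k) D); auto; lia).
  split.
  - intros a b c d Hab Hbc Hcd Hdk. apply (pp_ptolemy _ _ _ _ HD);
      try apply skip_lt; auto. pose proof (skip_le (S s) d). lia.
  - intros a b Hab Hbk. apply (pp_lower _ _ _ _ HD);
      [apply skip_lt; auto | pose proof (skip_le (S s) b); lia].
  - intros a Ha. unfold skip.
    destruct (Nat.ltb_spec a (S s)), (Nat.ltb_spec (S a) (S s)).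
    + apply Rle_trans with M; [apply (pp_side _ _ _ _ HD); lia | lra].
    + replace a with s by lia. exact ear_le.
    + lia.
    + apply Rle_trans with M; [apply (pp_side _ _ _ _ HD); lia | lra].
  - intros Hk. unfold skip.
    destruct (Nat.ltb_spec 0 (S s)), (Nat.ltb_spec (k - 1) (S s)); try lia.
    replace (S (k - 1)) with (S k - 1)%nat by lia.
    apply Rle_trans with M; [apply (pp_closing _ _ _ _ HD); lia | lra].
Qed.

Lemma ptolemy_polygon_ear_vertex_bound B :
  (forall a b, (a < b)%nat -> (b < S k)%nat -> a <> S s -> b <> S s -> Cmod (D a b) <= B) ->
  forall a b, (a < b)%nat -> (b < S k)%nat -> (a = S s \/ b = S s) ->
  Cmod (D a b) <= Rmax M (2 * M * B / eps).
Proof.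
  intros HB a b Hab Hbk Ht.
  assert (Hear : eps <= Cmod (D s (S (S s)))) by (apply (pp_lower _ _ _ _ HD); lia).
  destruct (Nat.eq_dec b (S a)) as [->|Hb].
  { apply Rle_trans with M; [apply (pp_side _ _ _ _ HD); lia | apply Rmax_l]. }
  apply Rle_trans with (2 * M * B / eps); [|apply Rmax_r].
  destruct Ht as [-> | ->].
  - apply (Cmod_ptolemy_div (D s (S (S s))) _ (D s (S s)) (D (S (S s)) b) (D s b) (D (S s) (S (S s))));
      auto.
    + apply (pp_ptolemy _ _ _ _ HD); lia.
    + apply (pp_side _ _ _ _ HD); lia.
    + apply HB; lia.
    + apply HB; lia.
    + apply (pp_side _ _ _ _ HD); lia.
  - apply (Cmod_ptolemy_div (D s (S (S s))) _ (D (S s) (S (S s))) (D a s) (D a (S (S s))) (D s (S s)));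
      auto.
    + rewrite Cmult_comm, (pp_ptolemy _ _ _ _ HD a s (S s) (S (S s))) by lia. ring.
    + apply (pp_side _ _ _ _ HD); lia.
    + apply HB; lia.
    + apply HB; lia.
    + apply (pp_side _ _ _ _ HD); lia.
Qed.
End Ear.

Lemma ptolemy_polygon_bounded k eps M : 0 < eps ->
  exists B, forall D, ptolemy_polygon k D eps M ->
    forall a b, (a < b)%nat -> (b < k)%nat -> Cmod (D a b) <= B.
Proof.
  intros He. revert M. induction k as [|k IH]; intros M.
  { exists 0. intros D _ a b Hab Hb. lia. }
  destruct (IH (2 * M)) as [B HB].
  exists (Rmax B (Rmax M (2 * M * B / eps))). intros D HD a b Hab Hbk.
  destruct (le_lt_dec k 2) as [Hsmall|Hbig].
  - apply Rle_trans with M; [|eapply Rle_trans; [apply Rmax_l | apply Rmax_r]].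
    destruct (Nat.eq_dec b (S a)) as [->|Hb]; [apply (pp_side _ _ _ _ HD); lia|].
    replace a with 0%nat by lia. replace b with (S k - 1)%nat by lia.
    apply (pp_closing _ _ _ _ HD); lia.
  - destruct (ptolemy_polygon_ear (S k) D eps M He HD ltac:(lia)) as [s [Hs Hear]].
    assert (Hcut := HB _ (ptolemy_polygon_cut_ear k s D eps M He HD Hs Hear)).
    assert (Hrest : forall a b, (a < b)%nat -> (b < S k)%nat -> a <> S s -> b <> S s ->
                    Cmod (D a b) <= B).
    { intros a' b' Hab' Hb' Ha't Hb't.
      destruct (skip_onto (S s) a' Ha't) as [u [_ <-]].
      destruct (skip_onto (S s) b' Hb't) as [v [Hv <-]].
      apply skip_lt in Hab'. apply Hcut; auto.
      destruct (Nat.eq_dec v k) as [->|]; [|lia].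
      unfold skip in Hb'. destruct (Nat.ltb_spec k (S s)); lia. }
    destruct (classic (a = S s \/ b = S s)) as [Ht|Ht].
    + apply Rle_trans with (Rmax M (2 * M * B / eps)); [|apply Rmax_r].
      now apply (ptolemy_polygon_ear_vertex_bound k s D eps M He HD Hs B Hrest).
    + apply Rle_trans with B; [apply Hrest; tauto | apply Rmax_l].
Qed.

Lemma Cmult_cancel_l (x u v : C) : x <> 0%C -> (x * u = x * v)%C -> u = v.
Proof.
  intros Hx E. replace u with (/ x * (x * u))%C by (field; auto).
  rewrite E. field; auto.
Qed.

Definition solves (q x : nat -> C) (lo hi : nat) : Prop :=
  forall p, (lo <= p)%nat -> (p + 2 <= hi)%nat -> x (p + 2)%nat = (q p * x (p + 1)%nat - x p)%C.

Lemma solves_eq0 q x lo hi : solves q x lo hi -> x lo = 0%C -> x (lo + 1)%nat = 0%C ->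
  forall p, (lo <= p <= hi)%nat -> x p = 0%C.
Proof.
  intros Hx H0 H1 p. induction p as [p IH] using lt_wf_ind. intros Hp.
  destruct (Nat.eq_dec p lo) as [->|]; [exact H0|].
  destruct (Nat.eq_dec p (lo + 1)) as [->|]; [exact H1|].
  replace p with (p - 2 + 2)%nat by lia.
  rewrite Hx, (IH (p - 2)%nat), (IH (p - 2 + 1)%nat) by lia. ring.
Qed.

Lemma solves_wronskian q x y lo hi : solves q x lo hi -> solves q y lo hi ->
  forall p, (lo <= p)%nat -> (p + 1 <= hi)%nat ->
  (x p * y (p + 1)%nat - y p * x (p + 1)%nat = x lo * y (lo + 1)%nat - y lo * x (lo + 1)%nat)%C.
Proof.
  intros Hx Hy p Hlo. induction p as [|p IH]; intros Hhi.
  - replace lo with 0%nat by lia. reflexivity.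
  - destruct (Nat.eq_dec lo (S p)) as [->|]; [reflexivity|].
    replace (S p + 1)%nat with (p + 2)%nat by lia. replace (S p) with (p + 1)%nat by lia.
    rewrite Hx, Hy, <- IH by lia. ring.
Qed.

Section Frieze.
Variables (n : nat) (Sset : C -> Prop) (c : Z -> Z -> C).
Hypothesis Sset_neq0 : forall w, Sset w -> w <> 0%C.
Hypothesis Hc : frieze n Sset c.

Lemma frieze_diag i : c i i = 0%C.
Proof. apply (proj1 Hc). Qed.

Lemma frieze_last i : c i (i + Z.of_nat n + 3)%Z = 0%C.
Proof. apply (proj1 Hc). Qed.

Lemma frieze_succ i : c i (i + 1)%Z = 1%C.
Proof. apply (proj1 Hc). Qed.

Lemma frieze_end i : c i (i + Z.of_nat n + 2)%Z = 1%C.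
Proof. apply (proj1 Hc). Qed.

Lemma frieze_one_or_mem i j : (i < j <= i + Z.of_nat n + 2)%Z -> c i j = 1%C \/ Sset (c i j).
Proof.
  intros Hj.
  destruct (Z.eq_dec j (i + 1)) as [->|]; [left; apply frieze_succ|].
  destruct (Z.eq_dec j (i + Z.of_nat n + 2)) as [->|]; [left; apply frieze_end|].
  right. apply (proj1 (proj2 Hc)). lia.
Qed.

Lemma frieze_neq0 i j : (i < j <= i + Z.of_nat n + 2)%Z -> c i j <> 0%C.
Proof.
  intros Hj. destruct (frieze_one_or_mem i j Hj) as [->|Hmem];
    [apply C1_nz | now apply Sset_neq0].
Qed.

Lemma frieze_det i j : (i < j <= i + Z.of_nat n + 2)%Z ->
  (c i j * c (i + 1)%Z (j + 1)%Z - c i (j + 1)%Z * c (i + 1)%Z j = 1)%C.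
Proof. intros Hj. apply (proj2 (proj2 Hc)); unfold indom; lia. Qed.

Definition entry (a b : nat) : C := c (Z.of_nat a) (Z.of_nat b).

Lemma entry_diag a : entry a a = 0%C.
Proof. apply frieze_diag. Qed.

Lemma entry_last a : entry a (a + n + 3) = 0%C.
Proof. unfold entry. rewrite <- frieze_last with (Z.of_nat a). f_equal. lia. Qed.

Lemma entry_succ a : entry a (a + 1) = 1%C.
Proof. unfold entry. rewrite <- frieze_succ with (Z.of_nat a). f_equal. lia. Qed.

Lemma entry_end a : entry a (a + n + 2) = 1%C.
Proof. unfold entry. rewrite <- frieze_end with (Z.of_nat a). f_equal. lia. Qed.

Lemma entry_one_or_mem a b : (a < b <= a + n + 2)%nat -> entry a b = 1%C \/ Sset (entry a b).
Proof. intros Hb. apply frieze_one_or_mem. lia. Qed.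

Lemma entry_neq0 a b : (a < b <= a + n + 2)%nat -> entry a b <> 0%C.
Proof. intros Hb. apply frieze_neq0. lia. Qed.

Lemma entry_det a b : (a < b <= a + n + 2)%nat ->
  (entry a b * entry (a + 1) (b + 1) - entry a (b + 1) * entry (a + 1) b = 1)%C.
Proof. intros Hb. unfold entry. rewrite !Nat2Z.inj_add. apply frieze_det. lia. Qed.

Definition quiddity (p : nat) : C := entry p (p + 2).

Lemma entry_row_solves a : solves quiddity (entry a) a (a + n + 3).
Proof.
  intros p Hap. remember (p - a)%nat as d eqn:Hd. revert a Hap Hd.
  induction d as [|d IH]; intros a Hap Hd Hp; unfold quiddity.
  - replace p with a by lia. rewrite entry_diag, entry_succ. ring.
  - (* multiply by [entry (a+1) (p+1)] and use the unimodular rules at [(a, p)], [(a, p+1)] *)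
    assert (Hrow := IH (a + 1)%nat ltac:(lia) ltac:(lia) ltac:(lia)).
    assert (Hdet1 := entry_det a (p + 1) ltac:(lia)).
    assert (Hdet0 := entry_det a p ltac:(lia)).
    replace (p + 1 + 1)%nat with (p + 2)%nat in Hdet1 by lia.
    apply (Cmult_cancel_l (entry (a + 1) (p + 1))); [apply entry_neq0; lia|].
    transitivity (entry a (p + 1) * entry (a + 1) (p + 2) - 1)%C; [rewrite <- Hdet1; ring|].
    rewrite Hrow. unfold quiddity. rewrite <- Hdet0. ring.
Qed.

Lemma entry_ptolemy a b c' d : (a < b < c')%nat -> (c' <= d <= a + n + 3)%nat ->
  (entry a c' * entry b d = entry a b * entry c' d + entry a d * entry b c')%C.
Proof.
  intros Habc Hd.
  destruct (Nat.eq_dec d c') as [->|Hdc]; [rewrite entry_diag; ring|].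
  (* [G] solves the row recurrence and vanishes at [c'] and, by the Wronskian of rows [a] and
     [b], at [c' + 1]. *)
  set (G x := (entry a c' * entry b x - entry a b * entry c' x - entry b c' * entry a x)%C).
  assert (HG : solves quiddity G c' (a + n + 3)).
  { intros p Hp Hp2. unfold G.
    rewrite (entry_row_solves a), (entry_row_solves b), (entry_row_solves c') by lia. ring. }
  assert (Hwr := solves_wronskian quiddity (entry a) (entry b) b (a + n + 3)).
  assert (G0 : G d = 0%C).
  { apply (solves_eq0 _ _ _ _ HG); try lia.
    - unfold G. rewrite entry_diag. ring.
    - unfold G. rewrite entry_succ.
      transitivity (entry a c' * entry b (c' + 1) - entry b c' * entry a (c' + 1) - entry a b)%C;
        [ring|].
      rewrite Hwr; try lia.
      + rewrite entry_diag, entry_succ. ring.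
      + intros p Hp Hp2. apply entry_row_solves; lia.
      + intros p Hp Hp2. apply entry_row_solves; lia. }
  transitivity (G d + (entry a b * entry c' d + entry a d * entry b c'))%C;
    [unfold G; ring | rewrite G0; ring].
Qed.

Lemma entry_row0_cases j : (j <= n + 3)%nat ->
  entry 0 j = 0%C \/ entry 0 j = 1%C \/ (Sset (entry 0 j) /\ (0 < j < n + 3)%nat).
Proof.
  intros Hj.
  destruct (Nat.eq_dec j 0) as [->|]; [left; apply entry_diag|].
  destruct (Nat.eq_dec j (n + 3)) as [->|]; [left; exact (entry_last 0)|].
  destruct (entry_one_or_mem 0 j ltac:(lia)) as [|Hmem]; [now right; left | right; right; split].
  - exact Hmem.
  - lia.
Qed.

Lemma frieze_ptolemy_polygon eps : eps <= 1 -> (forall w, Sset w -> eps <= Cmod w) ->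
  ptolemy_polygon (n + 3) entry eps 1.
Proof.
  intros Heps Hlow. split.
  - intros a b c' d Hab Hbc Hcd Hd. apply entry_ptolemy; lia.
  - intros a b Hab Hb. destruct (entry_one_or_mem a b ltac:(lia)) as [->|Hmem].
    + rewrite Cmod_1. exact Heps.
    + now apply Hlow.
  - intros a Ha. replace (S a) with (a + 1)%nat by lia. rewrite entry_succ, Cmod_1. lra.
  - intros _. replace (n + 3 - 1)%nat with (0 + n + 2)%nat by lia.
    rewrite entry_end, Cmod_1. lra.
Qed.

End Frieze.

Lemma Cmult_cancel_det (a x x' y : C) : a <> 0%C ->
  (a * x - y = 1)%C -> (a * x' - y = 1)%C -> x = x'.
Proof.
  intros Ha E E'. apply (Cmult_cancel_l a); auto.
  transitivity (y + 1)%C; [rewrite <- E | rewrite <- E']; ring.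
Qed.

Section Determination.
Variables (n : nat) (Sset : C -> Prop) (c d : Z -> Z -> C).
Hypothesis Sset_neq0 : forall w, Sset w -> w <> 0%C.
Hypothesis Hc : frieze n Sset c.
Hypothesis Hd : frieze n Sset d.

Definition row_eq (i : Z) : Prop := forall j, indom n i j -> c i j = d i j.

(* The unimodular rule at [(i, j)] solves for [c (i+1) (j+1)] (or, backwards, for [c i j])
   because the band entries dividing it are nonzero. *)
Lemma row_eq_succ i : row_eq i -> row_eq (i + 1).
Proof.
  intros Hi.
  assert (Hrow : forall K, (K <= n + 3)%nat ->
    c (i + 1)%Z (i + 1 + Z.of_nat K)%Z = d (i + 1)%Z (i + 1 + Z.of_nat K)%Z).
  { induction K as [|K IH]; intros HK.
    - now rewrite Z.add_0_r, (frieze_diag n Sset _ Hc), (frieze_diag n Sset _ Hd).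
    - destruct (Nat.eq_dec (S K) (n + 3)) as [HK3|HK3].
      + replace (i + 1 + Z.of_nat (S K))%Z with (i + 1 + Z.of_nat n + 3)%Z by lia.
        now rewrite (frieze_last n Sset _ Hc), (frieze_last n Sset _ Hd).
      + set (j := (i + 1 + Z.of_nat K)%Z) in IH.
        replace (i + 1 + Z.of_nat (S K))%Z with (j + 1)%Z by lia.
        assert (Ec := frieze_det n Sset _ Hc i j ltac:(lia)).
        assert (Ed := frieze_det n Sset _ Hd i j ltac:(lia)).
        rewrite IH, (Hi j), (Hi (j + 1)%Z) in Ec by (unfold indom; lia).
        apply (Cmult_cancel_det (d i j) _ _ _ (frieze_neq0 n Sset _ Sset_neq0 Hd i j ltac:(lia)) Ec Ed). }
  intros j Hj. unfold indom in Hj.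
  replace j with (i + 1 + Z.of_nat (Z.to_nat (j - (i + 1))))%Z by lia.
  apply Hrow. lia.
Qed.

Lemma row_eq_pred i : row_eq (i + 1) -> row_eq i.
Proof.
  intros Hi.
  assert (Hrow : forall K, (K <= n + 3)%nat ->
    c i (i + Z.of_nat n + 3 - Z.of_nat K)%Z = d i (i + Z.of_nat n + 3 - Z.of_nat K)%Z).
  { induction K as [|K IH]; intros HK.
    - rewrite Z.sub_0_r. now rewrite (frieze_last n Sset _ Hc), (frieze_last n Sset _ Hd).
    - destruct (Nat.eq_dec (S K) (n + 3)) as [HK3|HK3].
      + replace (i + Z.of_nat n + 3 - Z.of_nat (S K))%Z with i by lia.
        now rewrite (frieze_diag n Sset _ Hc), (frieze_diag n Sset _ Hd).
      + set (j := (i + Z.of_nat n + 3 - Z.of_nat (S K))%Z).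
        replace (i + Z.of_nat n + 3 - Z.of_nat K)%Z with (j + 1)%Z in IH by lia.
        assert (Ec := frieze_det n Sset _ Hc i j ltac:(lia)).
        assert (Ed := frieze_det n Sset _ Hd i j ltac:(lia)).
        rewrite IH, (Hi j), (Hi (j + 1)%Z) in Ec by (unfold indom; lia).
        rewrite (Cmult_comm (c i j)) in Ec. rewrite (Cmult_comm (d i j)) in Ed.
        apply (Cmult_cancel_det (d (i + 1)%Z (j + 1)%Z) _ _ _
          (frieze_neq0 n Sset _ Sset_neq0 Hd (i + 1) (j + 1) ltac:(lia)) Ec Ed). }
  intros j Hj. unfold indom in Hj.
  replace j with (i + Z.of_nat n + 3 - Z.of_nat (Z.to_nat (i + Z.of_nat n + 3 - j)))%Z by lia.
  apply Hrow. lia.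
Qed.

Lemma frieze_eq_of_row0 : row_eq 0 -> forall i j, indom n i j -> c i j = d i j.
Proof.
  intros H0 i. revert i. apply (Z.peano_ind row_eq); [exact H0 | |].
  - intros i Hi. rewrite <- Z.add_1_r. now apply row_eq_succ.
  - intros i Hi. apply row_eq_pred. now rewrite Z.add_1_r, Z.succ_pred.
Qed.

End Determination.

Lemma finite_representatives {A K : Type} (P : A -> Prop) (eqv : A -> A -> Prop)
  (Rk : A -> K -> Prop) (Ks : list K) :
  (forall x, P x -> exists k, In k Ks /\ Rk x k) ->
  (forall x y k, P x -> P y -> Rk x k -> Rk y k -> eqv x y) ->
  exists L, forall x, P x -> exists y, In y L /\ eqv x y.
Proof.
  revert P. induction Ks as [|k Ks IH]; intros P Hcov Huniq.
  { exists nil. intros x Hx. now destruct (Hcov x Hx) as [k [[] _]]. }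
  destruct (IH (fun x => P x /\ ~ Rk x k)) as [L HL].
  - intros x [Hx Hnk]. destruct (Hcov x Hx) as [k' [[<-|Hk'] Hr]]; [contradiction | eauto].
  - intros x y k' [Hx _] [Hy _]. now apply Huniq.
  - destruct (classic (exists x0, P x0 /\ Rk x0 k)) as [[x0 [Hx0 Hr0]]|Hnone].
    + exists (x0 :: L). intros x Hx. destruct (classic (Rk x k)) as [Hr|Hr].
      * exists x0. split; [now left | now apply (Huniq x x0 k)].
      * destruct (HL x (conj Hx Hr)) as [y [Hy Heq]]. exists y. split; [now right | exact Heq].
    + exists L. intros x Hx. apply HL. split; [exact Hx|]. intros Hr. apply Hnone. eauto.
Qed.

Fixpoint tuples {A : Type} (k : nat) (F : list A) : list (list A) :=
  match k with
  | O => nil :: nil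
  | S k' => flat_map (fun x => map (cons x) (tuples k' F)) F
  end.

Lemma In_tuples {A : Type} (F l : list A) :
  (forall x, In x l -> In x F) -> In l (tuples (length l) F).
Proof.
  induction l as [|x l IH]; intros HF; [now left|].
  apply in_flat_map. exists x. split; [apply HF; now left|].
  apply in_map, IH. intros y Hy. apply HF. now right.
Qed.

Lemma Cmod_le_abs (z : C) : Cmod z <= Rabs (fst z) + Rabs (snd z).
Proof.
  unfold Cmod. pose proof (Rabs_pos (fst z)). pose proof (Rabs_pos (snd z)).
  rewrite <- (sqrt_pow2 (Rabs (fst z) + Rabs (snd z))) by lra.
  apply sqrt_le_1_alt. rewrite <- (pow2_abs (fst z)), <- (pow2_abs (snd z)). nra.
Qed.

Lemma Cnorm_Csub (w z : Cplx) : Cnorm (Csub w z) = Cmod (w - z)%C.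
Proof. reflexivity. Qed.

(* Heine-Borel: finitely many boxes cover the square [-B, B]^2, each centred at a point [z]
   and so small that it meets the discrete set at most in [z]. *)
Lemma discrete_bounded_finite (Rset : Cplx -> Prop) : discrete Rset ->
  forall B, exists L, forall w, Rset w -> Cmod w <= B -> In w L.
Proof.
  intros Hdisc B. destruct (choice _ Hdisc) as [r Hr].
  set (centre (t : Compactness.Tn 2 R) := (fst t, fst (snd t)) : C).
  assert (Hr2 : forall t, 0 < r (centre t) / 2) by (intros t; destruct (Hr (centre t)); lra).
  set (delta t := mkposreal _ (Hr2 t)).
  set (emb (w : C) := (fst w, (snd w, tt)) : Compactness.Tn 2 R).
  assert (Hcentre : forall w t, Rset w -> close_n 2 (delta t) (emb w) t -> w = centre t).
  { intros [w1 w2] [t1 [t2 []]] Hw [Hc1 [Hc2 _]]. simpl in Hc1, Hc2.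
    apply NNPP. intros Hne. destruct (Hr (centre (t1, (t2, tt)))) as [_ Hsep].
    specialize (Hsep _ Hw Hne). rewrite Cnorm_Csub in Hsep.
    pose proof (Cmod_le_abs ((w1, w2) - centre (t1, (t2, tt)))%C) as Habs.
    simpl in Hsep, Habs. unfold Rminus in Hc1, Hc2. lra. }
  apply NNPP. intros Hno. apply (compactness_list 2 (-B, (-B, tt)) (B, (B, tt)) delta).
  intros [l Hl]. apply Hno.
  destruct (finite_representatives (fun w => Rset w /\ Cmod w <= B) eq
    (fun w t => close_n 2 (delta t) (emb w) t) l) as [L HL].
  - intros w [_ Hw]. destruct (Hl (emb w)) as [t [Ht [_ Hclose]]]; [|eauto].
    pose proof (Rmax_Cmod w). pose proof (Rmax_l (Rabs (fst w)) (Rabs (snd w))).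
    pose proof (Rmax_r (Rabs (fst w)) (Rabs (snd w))).
    simpl. split; [|split; [|exact I]]; apply Rabs_le_between; lra.
  - intros w w' t [Hw _] [Hw' _] Hc Hc'. now rewrite (Hcentre w t), (Hcentre w' t).
  - exists L. intros w Hw Hb. destruct (HL w (conj Hw Hb)) as [y [Hy <-]]. exact Hy.
Qed.

Lemma discrete_nonzero_Cmod_ge (Rset : Cplx -> Prop) : discrete Rset ->
  exists eps, 0 < eps <= 1 /\ forall w : C, nonzero_part Rset w -> eps <= Cmod w.
Proof.
  intros Hdisc. destruct (Hdisc (RtoC 0)) as [eps0 [Heps0 Hsep]].
  exists (Rmin eps0 1). split; [split; [apply Rmin_glb_lt | apply Rmin_r]; lra|].
  intros w [Hw Hw0]. apply Rle_trans with eps0; [apply Rmin_l|].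
  replace (Cmod w) with (Cnorm (Csub w (RtoC 0))) by (rewrite Cnorm_Csub; f_equal; ring).
  now apply Hsep.
Qed.

Theorem corollary3p8 :
  forall (Rset : Cplx -> Prop), discrete Rset ->
  forall n : nat,
    exists L : list (Z -> Z -> Cplx),
      forall c : Z -> Z -> Cplx, frieze n (nonzero_part Rset) c ->
        exists d, In d L /\ forall i j : Z, indom n i j -> c i j = d i j.
Proof.
  intros Rset Hdisc n.
  set (Sset := nonzero_part Rset).
  assert (Sset_neq0 : forall w : C, Sset w -> w <> 0%C) by (intros w [_ Hw]; exact Hw).
  destruct (discrete_nonzero_Cmod_ge Rset Hdisc) as [eps [[Heps0 Heps1] Hlow]].
  destruct (ptolemy_polygon_bounded (n + 3) eps 1 Heps0) as [B HB].
  destruct (discrete_bounded_finite Rset Hdisc B) as [Lr HLr].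
  set (row0 (c : Z -> Z -> C) := map (entry c 0) (seq 0 (n + 4))).
  apply (finite_representatives (frieze n Sset) _ (fun c t => row0 c = t)
    (tuples (n + 4) (RtoC 0 :: RtoC 1 :: Lr))).
  - intros c Hc. exists (row0 c). split; [|reflexivity].
    replace (n + 4)%nat with (length (row0 c)) by (unfold row0; now rewrite length_map, length_seq).
    apply In_tuples. intros x Hx. apply in_map_iff in Hx as [j [<- Hj]]. apply in_seq in Hj.
    destruct (entry_row0_cases n Sset c Hc j ltac:(lia)) as [->|[->|[[Hmem _] Hj']]];
      [now left | now right; left | right; right].
    apply HLr; [exact Hmem|].
    apply (HB _ (frieze_ptolemy_polygon n Sset c Sset_neq0 Hc eps Heps1 Hlow)); lia.
  - intros c d t Hc Hd <- Hrow. apply (frieze_eq_of_row0 n Sset c d Sset_neq0 Hc Hd).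
    intros j Hj. unfold indom in Hj. replace j with (Z.of_nat (Z.to_nat j)) by lia.
    apply (ext_in_map (eq_sym Hrow)). apply in_seq. lia.
Qed.
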